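(* Let $N=\{1,\dots,n\}$, let $\boldsymbol{x}=(x_1,\dots,x_n)\in[0,1]^n$ be a profile of agent locations, let $s\in[0,1]$ be a facility location, and let $k$ be a positive integer with $k\le n$. Then the subgame $\Gamma_{\boldsymbol{x}}(s,k)$ has a (pure-strategy) Nash equilibrium, and in every Nash equilibrium of $\Gamma_{\boldsymbol{x}}(s,k)$ each agent $i\in N$ attains utility $1-|s-x_i|$ if $i\in N_k^*(\boldsymbol{x},s)$, and attains utility $0$ otherwise.
   Context: Distances are $d(a,b)=|a-b|$. Given $\boldsymbol{x}$ and $s$, agents are ordered by a priority relation $\triangleright$: agent $i$ has higher priority than agent $j$ if $|s-x_i|<|s-x_j|$; ties between equidistant agents are broken by a fixed deterministic rule, so $\triangleright$ is a complete strict order. $N_k^*(\boldsymbol{x},s)$ denotes the set of the $k$ highest-priority agents under $\triangleright$ (the ''$k$-closest'' agents). The subgame $\Gamma_{\boldsymbol{x}}(s,k)$ is the complete-information game in which each agent $i$ simultaneously chooses an action $a_i\in\{\emptyset,s\}$ ($a_i=s$ means travelling to the facility). Let $T=\{i: a_i=s\}$. If $|T|\le k$, all agents in $T$ are served; if $|T|>k$, the $k$ highest-priority agents of $T$ (under $\triangleright$) are served. A served agent $i$ gets utility $1-|s-x_i|$; an agent with $a_i=s$ who is not served gets $-|s-x_i|$; an agent with $a_i=\emptyset$ gets $0$. *)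

From mathcomp Require Import all_boot all_order all_algebra.
Set Implicit Arguments. Unset Strict Implicit. Unset Printing Implicit Defensive.
Import Order.TTheory GRing.Theory Num.Theory.
Local Open Scope ring_scope.

Section Game.
Variables (R : realFieldType) (n : nat).

(* Agents are 'I_n; x i is the location of agent i, s the facility.
   pr i j means "agent i has higher priority than agent j". *)

(* pr is a strict complete order on agents refining distance to s:
   the distance-based order with ties broken by some fixed deterministic
   rule. *)
Definition priority_order (x : 'I_n -> R) (s : R) (pr : rel 'I_n) : Prop :=
  [/\ (forall i, ~~ pr i i),
      (forall i j l, pr i j -> pr j l -> pr i l),
      (forall i j, i != j -> pr i j || pr j i) &
      (forall i j, `|s - x i| < `|s - x j| -> pr i j)].

Definition Nstar (pr : rel 'I_n) (k : nat) : {set 'I_n} :=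
  [set i | #|[set j | pr j i]| < k]%N.

(* An action profile: a i = true iff agent i travels to the facility. *)
Definition served (pr : rel 'I_n) (k : nat) (a : 'I_n -> bool) (i : 'I_n) : bool :=
  a i && (#|[set j | a j & pr j i]| < k)%N.

Definition utility (x : 'I_n -> R) (s : R) (pr : rel 'I_n) (k : nat)
    (a : 'I_n -> bool) (i : 'I_n) : R :=
  if a i then
    (if served pr k a i then 1 - `|s - x i| else - `|s - x i|)
  else 0.

Definition deviate (a : 'I_n -> bool) (i : 'I_n) (b : bool) : 'I_n -> bool :=
  fun j => if j == i then b else a j.

Definition nash_eq (x : 'I_n -> R) (s : R) (pr : rel 'I_n) (k : nat)
    (a : 'I_n -> bool) : Prop :=
  forall (i : 'I_n) (b : bool),
    utility x s pr k (deviate a i b) i <= utility x s pr k a i.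

End Game.

From mathcomp Require Import all_boot all_order all_algebra.
From mathcomp Require Import lra.
Set Implicit Arguments. Unset Strict Implicit. Unset Printing Implicit Defensive.
Import Order.TTheory GRing.Theory Num.Theory.
Local Open Scope ring_scope.

(* Sending exactly the k closest agents is an equilibrium: each of them is
   served whatever the others do, and an outsider who travels is crowded out
   by k agents of higher priority.  Conversely, in any equilibrium staying
   home bounds every utility below by 0, and an agent of N_k^* can always
   secure 1 - |s - x_i| by travelling.  An outsider can only be served if some
   agent j of N_k^* stays home; j could secure 1 - |s - x_j| by travelling, so
   |s - x_j| = 1, and since j has priority, the outsider is at distance 1 too
   and gets utility 0 all the same. *)

Section StrictTotalOrder.

Variables (n : nat) (pr : rel 'I_n).
Hypotheses (pr_irr : forall i, ~~ pr i i)
  (pr_trans : forall i j l, pr i j -> pr j l -> pr i l)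
  (pr_total : forall i j, i != j -> pr i j || pr j i).

Lemma pr_asym i j : pr i j -> ~~ pr j i.
Proof. by move=> pij; apply/negP => /(pr_trans pij); rewrite (negbTE (pr_irr i)). Qed.

Definition rank (j : 'I_n) : nat := #|[set l | pr l j]|.

Lemma rank_lt_n j : (rank j < n)%N.
Proof.
rewrite -[X in (_ < X)%N]card_ord; apply: proper_card; apply/properP.
by split; [apply/subsetP | exists j; rewrite ?inE].
Qed.

Lemma rank_pr_lt i j : pr i j -> (rank i < rank j)%N.
Proof.
move=> pij; apply: proper_card; apply/properP; split.
  by apply/subsetP => l; rewrite !inE => /pr_trans; apply.
by exists i; rewrite !inE.
Qed.

Lemma rank_inj : injective rank.
Proof.
move=> i j eq_rank; apply/eqP/negPn/negP => /pr_total/orP.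
by case=> /rank_pr_lt; rewrite eq_rank ltnn.
Qed.

Lemma card_Nstar k : (k <= n)%N -> #|Nstar pr k| = k.
Proof.
move=> le_kn; pose ord_rank j := Ordinal (rank_lt_n j).
have ord_rank_inj : injective ord_rank by move=> i j /(congr1 val) /rank_inj.
have -> : Nstar pr k = ord_rank @^-1: [set r : 'I_n | (r < k)%N].
  by apply/setP => j; rewrite !inE.
rewrite card_preimset //.
have -> : [set r : 'I_n | (r < k)%N] = widen_ord le_kn @: [set: 'I_k].
  apply/setP => r; rewrite inE; apply/idP/imsetP => [lt_rk | [t _ ->]].
    by exists (Ordinal lt_rk) => //; apply: val_inj.
  by rewrite /= ltn_ord.
rewrite card_imset ?cardsT ?card_ord // => t u /(congr1 val) eq_tu.
exact: val_inj.
Qed.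

Lemma Nstar_pr k i j : j \in Nstar pr k -> i \notin Nstar pr k -> pr j i.
Proof.
rewrite !inE -leqNgt => lt_jk le_ki.
have neq_ji : j != i by apply: contraTneq lt_jk => ->; rewrite -leqNgt.
case/orP: (pr_total neq_ji) => // pij.
suff : (k <= #|[set l | pr l j]|)%N by rewrite leqNgt lt_jk.
apply: leq_trans le_ki (subset_leq_card _).
by apply/subsetP => l; rewrite !inE => /pr_trans; apply.
Qed.

End StrictTotalOrder.

Section Subgame.

Variables (R : realFieldType) (n : nat) (x : 'I_n -> R) (s : R).
Variables (pr : rel 'I_n) (k : nat).
Hypotheses (pr_order : priority_order x s pr) (le_kn : (k <= n)%N).

Let pr_irr : forall i, ~~ pr i i. Proof. by case: pr_order. Qed.
Let pr_trans : forall i j l, pr i j -> pr j l -> pr i l.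
Proof. by case: pr_order. Qed.
Let pr_total : forall i j, i != j -> pr i j || pr j i.
Proof. by case: pr_order. Qed.

Local Notation d i := `|s - x i|.
Local Notation utility := (utility x s pr k).
Local Notation nash_eq := (nash_eq x s pr k).

Lemma pr_dist_le i j : pr j i -> d j <= d i.
Proof.
move=> pji; rewrite leNgt; apply: contra (pr_asym pr_irr pr_trans pji).
by case: pr_order => _ _ _; apply.
Qed.

Lemma served_Nstar (a : 'I_n -> bool) i :
  i \in Nstar pr k -> a i -> served pr k a i.
Proof.
rewrite inE /served => lt_ik ->; apply: leq_ltn_trans lt_ik.
by apply: subset_leq_card; apply/subsetP => l; rewrite !inE => /andP[].
Qed.

Lemma unserved_outside_Nstar (a : 'I_n -> bool) i :
  (forall j, j \in Nstar pr k -> a j) -> i \notin Nstar pr k -> ~~ served pr k a i.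
Proof.
move=> Nstar_a iNstar; rewrite /served negb_and -leqNgt; apply/orP; right.
rewrite -{1}(card_Nstar pr_irr pr_trans pr_total le_kn).
apply: subset_leq_card; apply/subsetP => j jNstar.
by rewrite inE Nstar_a ?(Nstar_pr pr_trans pr_total jNstar).
Qed.

Lemma utility_deviate_home (a : 'I_n -> bool) i : utility (deviate a i false) i = 0.
Proof. by rewrite /utility /deviate eqxx. Qed.

Lemma utility_deviate_travel_Nstar (a : 'I_n -> bool) i :
  i \in Nstar pr k -> utility (deviate a i true) i = 1 - d i.
Proof.
by move=> iNstar; rewrite /utility served_Nstar // /deviate eqxx.
Qed.

Hypotheses (x01 : forall i, 0 <= x i <= 1) (s01 : 0 <= s <= 1).

Lemma dist_le1 i : d i <= 1.
Proof.
have /andP[? ?] := x01 i; case/andP: s01 => ? ?.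
by rewrite ler_norml; apply/andP; split; lra.
Qed.

Lemma utility_le (a : 'I_n -> bool) i : utility a i <= 1 - d i.
Proof.
have := dist_le1 i; have := normr_ge0 (s - x i); rewrite /utility.
by case: (a i); case: (served pr k a i) => ? ?; lra.
Qed.

Lemma Nstar_nash_eq : nash_eq (fun j => j \in Nstar pr k).
Proof.
move=> i b; case iNstar: (i \in Nstar pr k).
  by rewrite {2}/utility iNstar served_Nstar ?utility_le.
rewrite {2}/utility iNstar /utility /deviate eqxx; case: b => //.
rewrite ifN ?oppr_le0 //; apply: unserved_outside_Nstar; rewrite ?iNstar //.
by move=> j jNstar; rewrite /deviate; case: eqP => // ji; rewrite -ji iNstar in jNstar.
Qed.

Section Equilibrium.

Variable a : 'I_n -> bool.
Hypothesis a_nash : nash_eq a.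

Lemma nash_utility_ge0 i : 0 <= utility a i.
Proof. by rewrite -(utility_deviate_home a i) a_nash. Qed.

Lemma nash_utility_Nstar i : i \in Nstar pr k -> utility a i = 1 - d i.
Proof.
move=> iNstar; apply/eqP; rewrite eq_le utility_le /=.
by rewrite -(utility_deviate_travel_Nstar a iNstar) a_nash.
Qed.

Lemma nash_dist_absent i : i \in Nstar pr k -> ~~ a i -> d i = 1.
Proof.
move=> iNstar ai_home; have := nash_utility_Nstar iNstar.
by rewrite /utility (negbTE ai_home); lra.
Qed.

Lemma nash_utility_outside_Nstar i : i \notin Nstar pr k -> utility a i = 0.
Proof.
move=> iNstar; have := nash_utility_ge0 i; rewrite /utility.
case: (a i) => //; case served_i: (served pr k a i); last first.
  by rewrite oppr_ge0 => d_le0; apply/eqP; rewrite oppr_eq0 normr_eq0 -normr_le0.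
have [j jNstar aj_home] : exists2 j, j \in Nstar pr k & ~~ a j.
  apply/exists_inP; apply: contraT; rewrite negb_exists_in => /forall_inP Nstar_a.
  have := unserved_outside_Nstar (a := a) _ iNstar; rewrite served_i.
  by apply=> j /Nstar_a /negPn.
have := pr_dist_le (Nstar_pr pr_trans pr_total jNstar iNstar).
by rewrite (nash_dist_absent jNstar aj_home) => ?; have := dist_le1 i; lra.
Qed.

End Equilibrium.

End Subgame.

Theorem proposition3p1 (R : realFieldType) (n : nat) (x : 'I_n -> R) (s : R)
    (k : nat) (pr : rel 'I_n) :
  (forall i, 0 <= x i <= 1) -> 0 <= s <= 1 ->
  (0 < k)%N -> (k <= n)%N ->
  priority_order x s pr ->
  (exists a : 'I_n -> bool, nash_eq x s pr k a) /\
  (forall a : 'I_n -> bool, nash_eq x s pr k a ->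
     forall i : 'I_n,
       utility x s pr k a i = if i \in Nstar pr k then 1 - `|s - x i| else 0).
Proof.
move=> x01 s01 _ le_kn pr_order; split.
  by exists (fun j => j \in Nstar pr k); apply: Nstar_nash_eq.
move=> a a_nash i; case: ifPn => [iNstar | iNstar].
  exact: nash_utility_Nstar.
exact: nash_utility_outside_Nstar.
Qed.
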